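(* For every weak composition $a$ of length $n$, \[\mathfrak{F}_a=\sum_{\substack{b\ge a\\ \mathrm{flat}(b)=\mathrm{flat}(a)}}\mathfrak{L}_b,\] where $b$ ranges over weak compositions of length $n$.
   Context: Weak composition of length $n$: sequence of $n$ nonnegative integers; $\mathrm{flat}(a)$ deletes zero parts; $b\ge a$ means $b_1+\cdots+b_i\ge a_1+\cdots+a_i$ for all $i$. $\mathfrak{F}_a=\sum x^c$ over weak compositions $c$ of length $n$ with $c\ge a$ and $\mathrm{flat}(c)$ refining $\mathrm{flat}(a)$ (i.e. $\mathrm{flat}(a)$ is obtained by summing consecutive parts of $\mathrm{flat}(c)$). A local move replaces consecutive entries $(0,k)$ at positions $p,p+1$ by $(i,j)$ with $i+j=k$, $i,j\ge0$; a fixed slide of $b$ is obtained from $b$ by a (possibly empty) sequence of local moves with $j>0$ required whenever $b_{p+1}\ne0$. $\mathfrak{L}_b=\sum x^c$ over the set of fixed slides $c$ of $b$. *)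

From HB Require Import structures.
From mathcomp Require Import all_boot all_algebra.
From mathcomp Require Import mpoly.
Set Implicit Arguments. Unset Strict Implicit. Unset Printing Implicit Defensive.
Import GRing.Theory.

(* Weak compositions of length n are the monomial exponents 'X_{1..n};
   the monomial x^c is 'X_[c] in {mpoly int[n]}.  Positions are 0-indexed. *)

Definition wc n (m : 'X_{1..n}) : seq nat := tval (multinom_val m).

Definition flat (s : seq nat) : seq nat := [seq x <- s | x != 0%N].

Definition dominates n (b a : 'X_{1..n}) : bool :=
  all (fun k => sumn (take k (wc a)) <= sumn (take k (wc b)))%N (iota 0 n.+1).

(* refines s t : t is obtained from s by summing consecutive (nonempty)
   blocks of parts of s *)
Fixpoint refines (s t : seq nat) {struct t} : bool :=
  match t with
  | [::] => s == [::]
  | k :: t' =>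
      has (fun i => (sumn (take i s) == k) && refines (drop i s) t')
          (iota 1 (size s))
  end.

(* one local move at position p (0-indexed, entries p and p+1), with the
   fixed-slide restriction relative to the original composition b:
   (0,k) at positions p,p+1 of c becomes (i,j) in c', i+j = k, and
   j > 0 is required whenever b_{p+1} != 0 *)
Definition slide_step (b c c' : seq nat) : bool :=
  has (fun p =>
    [&& size c' == size c,
        nth 0%N c p == 0%N,
        (nth 0%N c' p + nth 0%N c' p.+1 == nth 0%N c p.+1)%N,
        all (fun q => nth 0%N c' q == nth 0%N c q)
            [seq q <- iota 0 (size c) | (q != p) && (q != p.+1)]
      & (nth 0%N b p.+1 != 0%N) ==> (0 < nth 0%N c' p.+1)%N])
    (iota 0 (size c).-1).

(* local moves preserve the total degree, so all intermediate compositions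
   live in the finite type of compositions of degree < mdeg b + 1 *)
Definition slide_rel n (b : 'X_{1..n}) : rel 'X_{1..n < (mdeg b).+1} :=
  fun c c' => slide_step (wc b) (wc (bmnm c)) (wc (bmnm c')).

Definition bself n (b : 'X_{1..n}) : 'X_{1..n < (mdeg b).+1} :=
  BMultinom (ltnSn (mdeg b)).

Definition is_fixed_slide n (b : 'X_{1..n}) (c : 'X_{1..n < (mdeg b).+1}) : bool :=
  connect (@slide_rel n b) (bself b) c.

Definition fund_slide n (a : 'X_{1..n}) : {mpoly int[n]} :=
  (\sum_(c : 'X_{1..n < (mdeg a).+1} |
          dominates (bmnm c) a && refines (flat (wc (bmnm c))) (flat (wc a)))
     'X_[bmnm c])%R.

Definition mono_slide n (b : 'X_{1..n}) : {mpoly int[n]} :=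
  (\sum_(c : 'X_{1..n < (mdeg b).+1} | is_fixed_slide c) 'X_[bmnm c])%R.

From HB Require Import structures.
From mathcomp Require Import all_boot all_algebra.
From mathcomp Require Import mpoly.
From mathcomp Require Import zify.
Set Implicit Arguments. Unset Strict Implicit. Unset Printing Implicit Defensive.
Import GRing.Theory.

(* Coefficients are compared one monomial x^c at a time. Refinement between
   compositions without zero parts is inclusion of their sets of partial sums.
   A composition c is a fixed slide of b iff c has the length and total of b
   and, at every nonzero part b_q, c_q is nonzero and the partial sums of b and
   c through position q agree: local moves preserve this, and conversely the
   compositions agreeing with b before r and with c after r lead from b to c.
   If c >= a and flat c refines flat a, then the b whose partial sums are the
   largest partial sums of a not exceeding those of c has b >= a, flat b = flat
   a and c as a fixed slide; it is the only such b, because the k-th partial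
   sum of a fixed slide of b stays below every partial sum of b exceeding the
   k-th one. Conversely, every fixed slide c of some b >= a with flat b = flat
   a has c >= a and flat c refining flat a, since the partial sums of b are
   among those of c. So both coefficients are 1 exactly when c >= a and flat c
   refines flat a. *)

Definition psum (s : seq nat) k := sumn (take k s).

Lemma psum0 s : psum s 0 = 0.
Proof. by rewrite /psum take0. Qed.

Lemma psumS s k : psum s k.+1 = psum s k + nth 0 s k.
Proof.
rewrite /psum; elim: s k => [|x s IH] [|k] /=; rewrite ?take0 ?addn0 //.
by rewrite IH addnA.
Qed.

Lemma psumD s i j : psum s (i + j) = psum s i + psum (drop i s) j.
Proof.
rewrite /psum; elim: s i => [|x s IH] [|i] /=; rewrite ?take0 ?drop0 //.
by rewrite IH addnA.
Qed.

Lemma leq_psum s i j : i <= j -> psum s i <= psum s j.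
Proof. by move=> /subnKC <-; rewrite psumD leq_addr. Qed.

Lemma psum_oversize s k : size s <= k -> psum s k = sumn s.
Proof. by move=> le_s_k; rewrite /psum take_oversize. Qed.

Lemma psum_minn s k : psum s k = psum s (minn k (size s)).
Proof. by case: (leqP k (size s)) => // /ltnW le_s_k; rewrite !psum_oversize. Qed.

Lemma sumn_psum_drop s i : sumn s = psum s i + sumn (drop i s).
Proof. by rewrite /psum -{1}(cat_take_drop i s) sumn_cat. Qed.

Definition psums s := [seq psum s k | k <- iota 0 (size s).+1].

Lemma psumsP s v : reflect (exists2 k, k <= size s & v = psum s k) (v \in psums s).
Proof.
apply: (iffP mapP) => [[k]|[k le_k ->]]; last by exists k; rewrite // mem_iota.
by rewrite mem_iota ltnS => /andP[_ le_k] ->; exists k.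
Qed.

Lemma psums_cons x s : psums (x :: s) = 0 :: map (addn x) (psums s).
Proof.
have iota_succ : iota 0 (size (x :: s)).+1 = 0 :: map (addn 1) (iota 0 (size s).+1).
  by rewrite -(iotaDl 1 0).
by rewrite /psums iota_succ map_cons -!map_comp psum0.
Qed.

Lemma size_psums s : size (psums s) = (size s).+1.
Proof. by rewrite size_map size_iota. Qed.

Lemma psums_head s : psums s = 0 :: behead (psums s).
Proof. by rewrite /psums /= psum0. Qed.

Lemma mem_psums0 s : 0 \in psums s.
Proof. by rewrite psums_head mem_head. Qed.

Lemma psums_inj : injective psums.
Proof.
elim=> [|x s IH] [|y t] eq_st; have := congr1 size eq_st; rewrite !size_psums // => _.
move: eq_st; rewrite !psums_cons (psums_head s) (psums_head t) !map_cons !addn0.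
case=> <- /(inj_map (@addnI x)) eq_tail; congr (_ :: _); apply: IH.
by rewrite (psums_head s) (psums_head t); congr (_ :: _); exact: eq_tail.
Qed.

Lemma eq_from_psum s t :
  size s = size t -> (forall k, k <= size s -> psum s k = psum t k) -> s = t.
Proof.
move=> size_st eq_psum; apply: psums_inj; rewrite /psums -size_st.
by apply/eq_in_map => k; rewrite mem_iota ltnS => /andP[_ /eq_psum].
Qed.

Lemma mem_psums_cons x s v :
  (v \in psums (x :: s)) = (v == 0) || (v \in map (addn x) (psums s)).
Proof. by rewrite psums_cons in_cons. Qed.

Lemma psums_flat s : psums (flat s) =i psums s.
Proof.
elim: s => [|x s IH] // v; have [-> | nz_x] := eqVneq x 0.
  have -> : flat (0 :: s) = flat s by [].
  rewrite mem_psums_cons (eq_map add0n) map_id IH.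
  by case: eqP => // ->; rewrite mem_psums0.
have -> : flat (x :: s) = x :: flat s by rewrite /flat /= nz_x.
by rewrite !mem_psums_cons (eq_mem_map _ IH).
Qed.

Lemma sumn_flat s : sumn (flat s) = sumn s.
Proof. by elim: s => [|x s IH] //=; case: eqP => [-> | _] /=; rewrite IH. Qed.

Lemma notin0_flat s : 0 \notin flat s.
Proof. by rewrite mem_filter eqxx. Qed.

Lemma notin0_drop i s : 0 \notin s -> 0 \notin drop i s.
Proof. by apply: contra => /mem_drop. Qed.

Lemma sorted_psums s : 0 \notin s -> sorted ltn (psums s).
Proof.
elim: s => [|x s IH] //; rewrite in_cons negb_or => /andP[nz_x /IH sorted_s].
rewrite psums_cons; change (path ltn 0 (map (addn x) (psums s))).
rewrite (path_sortedE ltn_trans) all_map.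
rewrite (homo_sorted _ _ sorted_s) ?andbT => [|u v]; last by rewrite ltn_add2l.
by apply/allP => v _ /=; rewrite ltn_addr // lt0n eq_sym.
Qed.

Lemma psums_inj_pos f g : 0 \notin f -> 0 \notin g -> psums f =i psums g -> f = g.
Proof.
move=> /sorted_psums sorted_f /sorted_psums sorted_g eq_fg.
exact/psums_inj/(irr_sorted_eq ltn_trans ltnn).
Qed.

Lemma sumn_refines s t : refines s t -> sumn s = sumn t.
Proof.
elim: t s => [|k t IH] s /=; first by move/eqP->.
by case/hasP => i _ /andP[/eqP <- /IH <-]; exact: sumn_psum_drop.
Qed.

Lemma refinesP f g : 0 \notin f -> 0 \notin g ->
  reflect ({subset psums g <= psums f} /\ sumn f = sumn g) (refines f g).
Proof.
elim: g f => [|k g IH] f f_pos.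
  move=> _ /=; apply: (iffP eqP) => [->|[_ sum0]]; first by split.
  by case: f f_pos sum0 => // x f; rewrite in_cons negb_or => /andP[nz_x _] /=; lia.
rewrite in_cons negb_or => /andP[nz_k g_pos] /=.
have k_in_psums : k \in psums (k :: g).
  by rewrite mem_psums_cons -{2}[k]addn0 map_f ?orbT ?mem_psums0.
apply: (iffP hasP) => [[i] | [sub_gf sum_fg]].
  rewrite mem_iota => /andP[_ i_le] /andP[/eqP fi_k]; change (psum f i = k) in fi_k.
  case/(IH _ (notin0_drop i f_pos) g_pos) => sub_g sum_g.
  split; last by rewrite (sumn_psum_drop f i) fi_k sum_g.
  move=> v; rewrite mem_psums_cons => /predU1P[->|]; first exact: mem_psums0.
  case/mapP=> w /sub_g /psumsP[j j_le ->] ->.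
  apply/psumsP; exists (i + j); last by rewrite psumD fi_k.
  by rewrite size_drop in j_le; lia.
have /psumsP[i i_le k_fi] := sub_gf k k_in_psums.
have i_gt0 : 0 < i by case: i k_fi {i_le} => // /eqP; rewrite psum0 eq_sym (negbTE nz_k).
exists i; first by rewrite mem_iota; lia.
rewrite k_fi eqxx; apply/IH => //; first exact: notin0_drop.
split; last by move: sum_fg; rewrite (sumn_psum_drop f i) k_fi /=; lia.
move=> w w_g; have /sub_gf/psumsP[j j_le fj] : k + w \in psums (k :: g).
  by rewrite mem_psums_cons map_f ?orbT.
have [j_le_i | i_lt_j] := leqP j i.
  have := leq_psum f j_le_i; rewrite -fj -k_fi => ?.
  by rewrite (_ : w = 0) ?mem_psums0 //; lia.
apply/psumsP; exists (j - i); first by rewrite size_drop; lia.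
by have := psumD f i (j - i); rewrite subnKC ?(ltnW i_lt_j) // -fj -k_fi; lia.
Qed.

Definition fixed_slideb (b c : seq nat) : bool :=
  [&& size c == size b, sumn c == sumn b &
   all (fun q => (nth 0 b q != 0) ==> (psum c q.+1 == psum b q.+1) && (nth 0 c q != 0))
       (iota 0 (size b))].

Lemma fixed_slideP b c : reflect
  [/\ size c = size b, sumn c = sumn b &
      forall q, nth 0 b q != 0 -> psum c q.+1 = psum b q.+1 /\ nth 0 c q != 0]
  (fixed_slideb b c).
Proof.
apply: (iffP and3P) => [[/eqP size_cb /eqP sum_cb /allP nz_b] | [size_cb sum_cb nz_b]].
  split=> // q nz_bq; have /nz_b/implyP/(_ nz_bq)/andP[/eqP ? ?] : q \in iota 0 (size b).
    by rewrite mem_iota ltnNge; apply: contra nz_bq => /(nth_default 0) ->.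
  by split.
split; try exact/eqP.
by apply/allP => q _; apply/implyP => /nz_b[-> ->]; rewrite eqxx.
Qed.

Lemma fixed_slide_refl b : fixed_slideb b b.
Proof. by apply/fixed_slideP; split. Qed.

Section FixedSlide.

Variables b c : seq nat.
Hypothesis bc : fixed_slideb b c.

Lemma leq_psum_fixed_slide k : psum b k <= psum c k.
Proof.
have [_ _ nz_b] := fixed_slideP b c bc.
elim: k => [|k IH]; first by rewrite !psum0.
have [z_bk | /nz_b[-> //]] := eqVneq (nth 0 b k) 0.
by rewrite psumS z_bk addn0 (leq_trans IH) ?leq_psum.
Qed.

Lemma psums_fixed_slide : {subset psums b <= psums c}.
Proof.
have [size_cb _ nz_b] := fixed_slideP b c bc.
suff psum_b k : exists2 j, j <= k & psum b k = psum c j.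
  move=> v /psumsP[k k_le ->]; have [j j_le ->] := psum_b k.
  by apply/psumsP; exists j; rewrite // size_cb (leq_trans j_le).
elim: k => [|k [j j_le IH]]; first by exists 0; rewrite ?psum0.
have [z_bk | /nz_b[e _]] := eqVneq (nth 0 b k) 0; last by exists k.+1.
by exists j; rewrite ?psumS ?z_bk ?addn0 // (leq_trans j_le).
Qed.

Lemma ltn_psum_fixed_slide k j : psum b k < psum b j -> psum c k < psum b j.
Proof.
have [_ _ nz_b] := fixed_slideP b c bc.
elim: j => [|j IH] lt_kj; first by rewrite psum0 in lt_kj.
have [/IH lt_ckj | le_jk] := ltnP (psum b k) (psum b j).
  by rewrite (leq_trans lt_ckj) ?leq_psum.
have nz_bj : nth 0 b j != 0.
  by apply: contraTneq lt_kj => z_bj; rewrite psumS z_bj addn0 -leqNgt.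
have k_le_j : k <= j.
  by rewrite leqNgt; apply: contraTN lt_kj => /leq_psum; rewrite -leqNgt.
have [<- nz_cj] := nz_b j nz_bj.
by rewrite psumS (leq_ltn_trans (leq_psum c k_le_j)) // -{1}[psum c j]addn0 ltn_add2l lt0n.
Qed.

End FixedSlide.

Definition local_move (c c' : seq nat) p : Prop :=
  [/\ p.+1 < size c, size c' = size c, nth 0 c p = 0,
      nth 0 c' p + nth 0 c' p.+1 = nth 0 c p.+1
    & forall q, q != p -> q != p.+1 -> nth 0 c' q = nth 0 c q].

Lemma slide_stepP b c c' : reflect
  (exists2 p, local_move c c' p & nth 0 b p.+1 != 0 -> 0 < nth 0 c' p.+1)
  (slide_step b c c').
Proof.
apply: (iffP hasP) => [[p] | [p [p_lt size_c' z_cp sum_c' other] pos_c']].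
  rewrite mem_iota => /andP[_ p_lt].
  case/and5P=> /eqP size_c' /eqP z_cp /eqP sum_c' /allP other /implyP pos_c'.
  exists p => //; split=> //; first lia.
  move=> q q_p q_p1; have [q_lt | q_ge] := ltnP q (size c).
    by apply/eqP/other; rewrite mem_filter q_p q_p1 mem_iota.
  by rewrite !nth_default ?size_c'.
exists p; first by rewrite mem_iota; lia.
rewrite size_c' z_cp sum_c' !eqxx /=; apply/andP; split; last exact/implyP.
by apply/allP => q; rewrite mem_filter => /andP[/andP[q_p q_p1] _]; apply/eqP/other.
Qed.

Section LocalMove.

Variables (c c' : seq nat) (p : nat).
Hypothesis move_cc' : local_move c c' p.

Lemma psum_local_move k :
  psum c' k = psum c k + (if k == p.+1 then nth 0 c' p else 0).
Proof.
have [_ _ z_cp sum_c' other] := move_cc'.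
elim: k => [|k IH]; first by rewrite !psum0.
rewrite !psumS IH eqSS; have [-> | k_p] := eqVneq k p.
  by rewrite z_cp (ltn_eqF (ltnSn p)); lia.
have [-> | k_p1] := eqVneq k p.+1; first lia.
by rewrite other // !addn0.
Qed.

Lemma sumn_local_move : sumn c' = sumn c.
Proof.
have [p_lt size_c' _ _ _] := move_cc'.
by have := psum_local_move (size c); rewrite !psum_oversize ?size_c' // gtn_eqF ?addn0.
Qed.

End LocalMove.

Lemma fixed_slide_step b c c' : fixed_slideb b c -> slide_step b c c' -> fixed_slideb b c'.
Proof.
case/fixed_slideP=> size_cb sum_cb nz_b /slide_stepP[p move_cc' pos_c'].
have [_ size_c' z_cp _ other] := move_cc'.
apply/fixed_slideP; split; first by rewrite size_c'.
  by rewrite (sumn_local_move move_cc').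
move=> q /[dup] nz_bq /nz_b[psum_cq nz_cq].
have q_p : q != p by apply: contraNneq nz_cq => ->; rewrite z_cp.
rewrite (psum_local_move move_cc') eqSS (negbTE q_p) addn0; split=> //.
have [eq_qp1 | q_p1] := eqVneq q p.+1.
  by rewrite eq_qp1 -lt0n pos_c' // -eq_qp1.
by rewrite (other q q_p q_p1).
Qed.

(* As [r] decreases from [size b - 1] to [0], [slide_mid b c r] runs from [b]
   to [c], each step being trivial or an admissible local move. *)
Definition slide_mid (b c : seq nat) r :=
  [seq if i < r then nth 0 b i else if i == r then psum c r.+1 - psum b r else nth 0 c i
  | i <- iota 0 (size b)].

Section SlideMid.

Variables b c : seq nat.

Lemma size_slide_mid r : size (slide_mid b c r) = size b.
Proof. by rewrite size_map size_iota. Qed.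

Lemma nth_slide_mid r i : i < size b -> nth 0 (slide_mid b c r) i =
  if i < r then nth 0 b i else if i == r then psum c r.+1 - psum b r else nth 0 c i.
Proof. by move=> i_lt; rewrite (nth_map 0) ?size_iota // nth_iota. Qed.

Lemma nth_slide_mid_lt r i : i < r -> i < size b -> nth 0 (slide_mid b c r) i = nth 0 b i.
Proof. by move=> i_lt_r i_lt; rewrite nth_slide_mid // i_lt_r. Qed.

Lemma nth_slide_mid_eq r : r < size b -> nth 0 (slide_mid b c r) r = psum c r.+1 - psum b r.
Proof. by move=> r_lt; rewrite nth_slide_mid // ltnn eqxx. Qed.

Lemma nth_slide_mid_gt r i : r < i -> i < size b -> nth 0 (slide_mid b c r) i = nth 0 c i.
Proof. by move=> r_lt_i i_lt; rewrite nth_slide_mid // ltnNge (ltnW r_lt_i) (gtn_eqF r_lt_i). Qed.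

Hypothesis bc : fixed_slideb b c.

Lemma slide_mid0 : slide_mid b c 0 = c.
Proof.
have [size_cb _ _] := fixed_slideP b c bc.
apply: (@eq_from_nth _ 0); rewrite ?size_slide_mid // => -[|i] i_lt.
  by rewrite nth_slide_mid_eq // psumS !psum0 add0n subn0.
by rewrite nth_slide_mid_gt.
Qed.

Lemma slide_mid_last : 0 < size b -> slide_mid b c (size b).-1 = b.
Proof.
have [size_cb sum_cb _] := fixed_slideP b c bc.
move=> b_gt0; apply: (@eq_from_nth _ 0); rewrite ?size_slide_mid // => i i_lt.
have [i_lt' | i_ge] := ltnP i (size b).-1; first by rewrite nth_slide_mid_lt.
have -> : i = (size b).-1 by lia.
rewrite nth_slide_mid_eq ?prednK // psum_oversize ?size_cb // sum_cb.
by have := psumS b (size b).-1; rewrite prednK // psum_oversize //; lia.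
Qed.

Lemma slide_mid_step r : r.+1 < size b ->
  slide_mid b c r = slide_mid b c r.+1 \/ slide_step b (slide_mid b c r.+1) (slide_mid b c r).
Proof.
have [size_cb _ nz_b] := fixed_slideP b c bc.
move=> r_lt; have r_lt' := ltnW r_lt; have := leq_psum_fixed_slide bc r.
have := psumS c r.+1; have := psumS b r; have := psumS c r => ? ? ? ?.
have [z_br | nz_br] := eqVneq (nth 0 b r) 0.
  right; apply/slide_stepP; exists r => [|/nz_b[_]]; last by rewrite nth_slide_mid_gt // lt0n.
  split; rewrite ?size_slide_mid //; first by rewrite nth_slide_mid_lt //; lia.
    by rewrite nth_slide_mid_eq ?(@nth_slide_mid_gt r r.+1) ?nth_slide_mid_eq //; lia.
  move=> q q_r q_r1; have [q_lt | q_ge] := ltnP q (size b); last first.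
    by rewrite !nth_default ?size_slide_mid.
  have [q_lt_r | r_le_q] := ltnP q r; first by rewrite !nth_slide_mid_lt //; lia.
  by rewrite !nth_slide_mid_gt //; lia.
left; apply: (@eq_from_nth _ 0); rewrite ?size_slide_mid // => i i_lt.
have [psum_cr1 _] := nz_b r nz_br.
have [i_lt_r | r_lt_i | ->] := ltngtP i r.
- by rewrite !nth_slide_mid_lt //; lia.
- have [-> | i_r1] := eqVneq i r.+1; first by rewrite nth_slide_mid_gt // nth_slide_mid_eq //; lia.
  by rewrite !nth_slide_mid_gt //; lia.
- by rewrite nth_slide_mid_eq ?nth_slide_mid_lt //; lia.
Qed.

End SlideMid.

Definition floor_psum (a : seq nat) v := \max_(j < (size a).+1 | psum a j <= v) psum a j.

Lemma floor_psumP a v : exists2 j, j <= size a & psum a j <= v /\ floor_psum a v = psum a j.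
Proof.
rewrite /floor_psum (bigmax_eq_arg ord0) ?psum0 //.
by case: arg_maxnP; rewrite ?psum0 // => j le_jv _; exists j; rewrite -1?ltnS.
Qed.

Lemma leq_floor_psum a v j : j <= size a -> psum a j <= v -> psum a j <= floor_psum a v.
Proof.
rewrite -ltnS => j_lt le_jv.
exact: (leq_bigmax_cond (Ordinal j_lt) (F := fun i : 'I_(size a).+1 => psum a i)).
Qed.

Lemma floor_psum_le a v : floor_psum a v <= v.
Proof. by have [j _ [le_jv ->]] := floor_psumP a v. Qed.

Lemma floor_psum_psum a j : j <= size a -> floor_psum a (psum a j) = psum a j.
Proof. by move=> j_le; apply/eqP; rewrite eqn_leq floor_psum_le leq_floor_psum. Qed.

Lemma floor_psum_homo a : {homo floor_psum a : v w / v <= w}.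
Proof.
move=> v w le_vw; have [j j_le [le_jv ->]] := floor_psumP a v.
exact: leq_floor_psum (leq_trans le_jv le_vw).
Qed.

Definition slide_source (a c : seq nat) :=
  [seq floor_psum a (psum c i.+1) - floor_psum a (psum c i) | i <- iota 0 (size a)].

Lemma size_slide_source a c : size (slide_source a c) = size a.
Proof. by rewrite size_map size_iota. Qed.

Lemma nth_slide_source a c i : i < size a ->
  nth 0 (slide_source a c) i = floor_psum a (psum c i.+1) - floor_psum a (psum c i).
Proof. by move=> i_lt; rewrite (nth_map 0) ?size_iota // nth_iota. Qed.

Lemma psum_slide_source a c k : k <= size a ->
  psum (slide_source a c) k = floor_psum a (psum c k).
Proof.
elim: k => [_|k IH k_lt]; first by rewrite !psum0 -(psum0 a) floor_psum_psum.
rewrite psumS IH 1?ltnW // nth_slide_source // subnKC //.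
by rewrite floor_psum_homo // leq_psum.
Qed.

Section SlideSource.

Variables a c : seq nat.
Hypotheses (size_ca : size c = size a) (dom_ca : forall k, psum a k <= psum c k).
Hypotheses (sub_ac : {subset psums a <= psums c}) (sum_ca : sumn c = sumn a).

Lemma slide_source_dominates k : psum a k <= psum (slide_source a c) k.
Proof.
rewrite psum_minn [psum (slide_source a c) k]psum_minn size_slide_source.
by rewrite psum_slide_source ?geq_minr // leq_floor_psum ?geq_minr.
Qed.

Lemma psums_slide_source : psums (slide_source a c) =i psums a.
Proof.
move=> v; apply/psumsP/psumsP => [[k] | [j j_le ->]].
  rewrite size_slide_source => k_le ->; rewrite psum_slide_source //.
  by have [j j_le [_ ->]] := floor_psumP a (psum c k); exists j.
have /sub_ac/psumsP[k k_le e] : psum a j \in psums a by apply/psumsP; exists j.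
exists k; first by rewrite size_slide_source -size_ca.
rewrite psum_slide_source -?size_ca // -e floor_psum_psum //.
Qed.

Lemma flat_slide_source : flat (slide_source a c) = flat a.
Proof.
apply: psums_inj_pos; rewrite ?notin0_flat // => v.
by rewrite !psums_flat psums_slide_source.
Qed.

Lemma fixed_slide_source : fixed_slideb (slide_source a c) c.
Proof.
apply/fixed_slideP; split; first by rewrite size_slide_source.
  rewrite -(psum_oversize (leqnn (size (slide_source a c)))) size_slide_source.
  rewrite psum_slide_source // psum_oversize ?size_ca //.
  by rewrite sum_ca -(psum_oversize (leqnn (size a))) floor_psum_psum.
move=> q nz_q; have q_lt : q < size a.
  by rewrite -(size_slide_source a c) ltnNge; apply: contra nz_q => /(nth_default 0) ->.
move: nz_q; rewrite nth_slide_source // psum_slide_source // subn_eq0 -ltnNge => lt_floor.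
have [j1 j1_le [le_j1 e1]] := floor_psumP a (psum c q.+1).
have /sub_ac/psumsP[j j_le e] : psum a j1 \in psums a by apply/psumsP; exists j1.
have lt_cqj : psum c q < psum c j.
  rewrite ltnNge; apply: contraTN lt_floor => le_jq; rewrite -leqNgt e1.
  by rewrite leq_floor_psum // e.
have q_lt_j : q < j by rewrite ltnNge; apply: contraTN lt_cqj => /leq_psum; rewrite -leqNgt.
have le_cq1 := leq_psum c q_lt_j; rewrite -e in lt_cqj le_cq1.
have eq_cq1 : psum c q.+1 = psum a j1 by apply/eqP; rewrite eqn_leq le_cq1 le_j1.
by split; [rewrite e1 | move: lt_cqj; rewrite -eq_cq1 psumS -lt0n; lia].
Qed.

End SlideSource.

Lemma fixed_slide_fund_support a b c :
  (forall k, psum a k <= psum b k) -> flat b = flat a -> fixed_slideb b c ->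
  (forall k, psum a k <= psum c k) /\ refines (flat c) (flat a).
Proof.
move=> dom_ab flat_ba bc; split=> [k|].
  exact: leq_trans (dom_ab k) (leq_psum_fixed_slide bc k).
have [_ sum_cb _] := fixed_slideP b c bc.
apply/refinesP; rewrite ?notin0_flat //; split.
  by move=> v; rewrite !psums_flat -(psums_flat a) -flat_ba psums_flat; exact: psums_fixed_slide.
by rewrite !sumn_flat sum_cb -(sumn_flat b) flat_ba sumn_flat.
Qed.

Lemma slide_source_spec a c :
  size c = size a -> (forall k, psum a k <= psum c k) -> refines (flat c) (flat a) ->
  [/\ forall k, psum a k <= psum (slide_source a c) k, flat (slide_source a c) = flat a
    & fixed_slideb (slide_source a c) c].
Proof.
move=> size_ca dom_ca /refinesP[||sub_ac sum_ca]; rewrite ?notin0_flat //.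
have {}sub_ac : {subset psums a <= psums c}.
  by move=> v; rewrite -psums_flat => /sub_ac; rewrite psums_flat.
rewrite !sumn_flat in sum_ca.
split; [exact: slide_source_dominates | exact: flat_slide_source | exact: fixed_slide_source].
Qed.

Lemma fixed_slide_source_uniq a b c :
  size b = size a -> flat b = flat a -> fixed_slideb b c -> b = slide_source a c.
Proof.
move=> size_ba flat_ba bc.
have psums_ba : psums b =i psums a by move=> v; rewrite -psums_flat flat_ba psums_flat.
apply: eq_from_psum; rewrite ?size_slide_source // => k k_le.
rewrite psum_slide_source -?size_ba //; apply/eqP; rewrite eqn_leq; apply/andP; split.
  have /psumsP[j j_le e] : psum b k \in psums a by rewrite -psums_ba; apply/psumsP; exists k.
  by rewrite e leq_floor_psum // -e leq_psum_fixed_slide.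
have [j0 j0_le [le_j0 ->]] := floor_psumP a (psum c k).
have /psumsP[j j_le e] : psum a j0 \in psums b by rewrite psums_ba; apply/psumsP; exists j0.
by rewrite e leqNgt; apply/negP => /(ltn_psum_fixed_slide bc); rewrite -e ltnNge le_j0.
Qed.

Lemma slide_step_sumn b c c' : slide_step b c c' -> sumn c' = sumn c.
Proof. by case/slide_stepP => p /sumn_local_move. Qed.

Lemma size_wc n (m : 'X_{1..n}) : size (wc m) = n.
Proof. exact: size_tuple. Qed.

Lemma wc_inj n : injective (@wc n).
Proof. by move=> m1 m2 eq_m; apply/val_inj/val_inj. Qed.

Lemma mdeg_wc n (m : 'X_{1..n}) : mdeg m = sumn (wc m).
Proof. by rewrite /mdeg sumnE. Qed.

Lemma exists_bmultinom n d (s : seq nat) :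
  size s = n -> sumn s < d -> exists m : 'X_{1..n < d}, wc (bmnm m) = s.
Proof.
move=> size_s sum_s; pose m := [multinom nth 0 s i | i < n].
have wc_m : wc m = s.
  apply: (@eq_from_nth _ 0); rewrite ?size_wc // => i i_lt.
  by have := mnm_nth 0 m (Ordinal i_lt); rewrite mnmE /= => <-.
have deg_m : mdeg m < d by rewrite mdeg_wc wc_m.
by exists (BMultinom deg_m).
Qed.

Lemma dominatesP n (b a : 'X_{1..n}) :
  reflect (forall k, psum (wc a) k <= psum (wc b) k) (dominates b a).
Proof.
apply: (iffP allP) => [le_ab k | le_ab k _]; last exact: le_ab.
rewrite psum_minn [psum (wc b) k]psum_minn !size_wc; apply: le_ab.
by rewrite mem_iota; lia.
Qed.

Lemma connect_slide_mid n (b : 'X_{1..n}) (C : seq nat) d (x : 'X_{1..n < (mdeg b).+1}) :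
  fixed_slideb (wc b) C -> d < n -> wc (bmnm x) = slide_mid (wc b) C (n.-1 - d) ->
  connect (@slide_rel n b) (bself b) x.
Proof.
move=> bC; elim: d x => [|d IH] x d_lt x_mid.
  suff -> : x = bself b by exact: connect0.
  apply/val_inj/wc_inj; rewrite x_mid subn0 (_ : n.-1 = (size (wc b)).-1); last first.
    by rewrite size_wc.
  by rewrite slide_mid_last ?size_wc.
have r_lt : (n.-1 - d.+1).+1 < size (wc b) by rewrite size_wc; lia.
have r1 : (n.-1 - d.+1).+1 = n.-1 - d by lia.
case: (slide_mid_step bC r_lt) => [eq_mid | step].
  by apply: IH; [lia | rewrite x_mid eq_mid r1].
have [y y_mid] : exists y : 'X_{1..n < (mdeg b).+1},
    wc (bmnm y) = slide_mid (wc b) C (n.-1 - d.+1).+1.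
  apply: exists_bmultinom; first by rewrite size_slide_mid size_wc.
  by rewrite -(slide_step_sumn step) -x_mid -mdeg_wc bmdeg.
apply: (connect_trans (IH y _ _) (connect1 _)); first lia.
  by rewrite y_mid r1.
by rewrite /slide_rel x_mid y_mid.
Qed.

Lemma is_fixed_slideE n (b : 'X_{1..n}) (c : 'X_{1..n < (mdeg b).+1}) :
  is_fixed_slide c = fixed_slideb (wc b) (wc (bmnm c)).
Proof.
apply/idP/idP.
  case/connectP => p slide_p ->.
  have : fixed_slideb (wc b) (wc (bmnm (bself b))) := fixed_slide_refl _.
  elim: p (bself b) slide_p => [|y p IH] x //= /andP[xy slide_p] bx.
  exact: IH slide_p (fixed_slide_step bx xy).
move=> bc; have [n0 | n_gt0] := posnP n.
  suff -> : c = bself b by exact: connect0.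
  apply/val_inj/wc_inj/(@eq_from_nth _ 0); rewrite !size_wc // => i i_lt; lia.
by apply: (connect_slide_mid bc (d := n.-1)); rewrite ?subnn ?slide_mid0 //; lia.
Qed.

Lemma mcoeff_sum_bmultinom (R : nzRingType) n d (P : pred 'X_{1..n}) (m : 'X_{1..n}) :
  mcoeff m (\sum_(c : 'X_{1..n < d} | P (bmnm c)) 'X_[bmnm c] : {mpoly R[n]})%R
  = ((P m && (mdeg m < d)%N)%:R)%R.
Proof.
rewrite raddf_sum /=; have [deg_m | deg_m] := ltnP (mdeg m) d; last first.
  rewrite andbF big1 // => c _; rewrite mcoeffX; case: eqP => // eq_cm.
  by move: deg_m; rewrite -eq_cm leqNgt bmdeg.
rewrite andbT; pose mb := BMultinom deg_m; case: (boolP (P m)) => Pm.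
  rewrite (bigD1 mb) //= mcoeffX eqxx big1 ?addr0 // => c /andP[_ c_mb].
  by rewrite mcoeffX; case: eqP => // eq_cm; case/eqP: c_mb; apply: val_inj.
by apply: big1 => c Pc; rewrite mcoeffX; case: eqP => // eq_cm; move: Pm; rewrite -eq_cm Pc.
Qed.

Lemma mcoeff_mono_slide n (b m : 'X_{1..n}) :
  mcoeff m (mono_slide b) = ((fixed_slideb (wc b) (wc m))%:R)%R.
Proof.
rewrite /mono_slide (eq_bigl (fun c => fixed_slideb (wc b) (wc (bmnm c)))) => [|c]; last first.
  exact: is_fixed_slideE.
rewrite (mcoeff_sum_bmultinom _ _ (fun m => fixed_slideb (wc b) (wc m))).
congr ((nat_of_bool _)%:R)%R.
by apply: andb_idr => /fixed_slideP[_ sum_mb _]; rewrite mdeg_wc sum_mb -mdeg_wc.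
Qed.

Lemma mcoeff_fund_slide n (a m : 'X_{1..n}) :
  mcoeff m (fund_slide a) = ((dominates m a && refines (flat (wc m)) (flat (wc a)))%:R)%R.
Proof.
rewrite (mcoeff_sum_bmultinom _ _
  (fun m => dominates m a && refines (flat (wc m)) (flat (wc a)))).
congr ((nat_of_bool _)%:R)%R; apply: andb_idr => /andP[_ /sumn_refines].
by rewrite !sumn_flat mdeg_wc => ->; rewrite -mdeg_wc.
Qed.

Theorem proposition4p7 (n : nat) (a : 'X_{1..n}) :
  fund_slide a =
  (\sum_(b : 'X_{1..n < (mdeg a).+1} |
          dominates (bmnm b) a && (flat (wc (bmnm b)) == flat (wc a)))
     mono_slide (bmnm b))%R.
Proof.
apply/mpolyP => m; rewrite mcoeff_fund_slide raddf_sum /=.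
under eq_bigr => b _ do rewrite mcoeff_mono_slide.
have [/andP[/dominatesP dom_ma ref_ma] | not_fund] := boolP (dominates m a && _).
  have size_ma : size (wc m) = size (wc a) by rewrite !size_wc.
  have [dom_src flat_src src_m] := slide_source_spec size_ma dom_ma ref_ma.
  have [b0 b0_src] : exists b0 : 'X_{1..n < (mdeg a).+1},
      wc (bmnm b0) = slide_source (wc a) (wc m).
    apply: exists_bmultinom; first by rewrite size_slide_source size_wc.
    by rewrite -sumn_flat flat_src sumn_flat -mdeg_wc.
  rewrite (bigD1 b0) /=; last first.
    by rewrite b0_src flat_src eqxx andbT; apply/dominatesP; rewrite b0_src.
  rewrite b0_src src_m big1 ?addr0 // => b /andP[/andP[_ /eqP flat_b] b_b0].
  case: (boolP (fixed_slideb _ _)) => // /(fixed_slide_source_uniq _ flat_b) b_src.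
  by case/eqP: b_b0; apply/val_inj/wc_inj; rewrite b0_src -b_src ?size_wc.
rewrite big1 // => b /andP[/dominatesP dom_ba /eqP flat_ba].
case: (boolP (fixed_slideb _ _)) => // /(fixed_slide_fund_support dom_ba flat_ba)[dom_ma ref_ma].
by case/negP: not_fund; rewrite ref_ma andbT; apply/dominatesP.
Qed.
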